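(* On $\mathrm{Mon}_+$ consider the relation $\varphi_0\sim\varphi_1$ iff there exist $v\in L^2([0,1],H^1_0([0,1]))$ and a Lagrangian flow $\varphi$ associated with $v$ such that $\varphi(0,x)=\varphi_0(x)$ and $\varphi(1,x)=\varphi_1(x)$ for all $x\in[0,1]$. This relation is symmetric and transitive, and in fact $\varphi_0\sim\varphi_1$ holds for every pair $\varphi_0,\varphi_1\in\mathrm{Mon}_+$.
   Context: $\mathrm{Mon}_+$ denotes the set of nondecreasing functions $f:[0,1]\to[0,1]$ with $f(0)=0$ and $f(1)=1$. Definition (Lagrangian flow): let $v\in L^1([0,1],C([0,1]))$. A map $\varphi:[0,1]\times[0,1]\to[0,1]$, $(t,x)\mapsto\varphi(t,x)$, is a Lagrangian flow associated with $v$ if (i) $x\mapsto\varphi(t,x)$ is nondecreasing for every $t$, and (ii) for every $x$ the map $t\mapsto\varphi(t,x)$ is absolutely continuous and $\varphi(t,x)-\varphi(s,x)=\int_s^t v(r,\varphi(r,x))\,dr$ for all $0\le s<t\le 1$. *)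

(* Lebesgue integration on compact intervals
   is introduced via the Henstock–Kurzweil (gauge) integral: a function is
   Lebesgue integrable on [a,b] iff it and its absolute value are
   HK-integrable, and then both integrals coincide. *)
From Stdlib Require Import Reals List.
Open Scope R_scope.

(* A tagged division of [a,b], as a list of (left end, right end, tag),
   which is fine with respect to the gauge delta. *)
Fixpoint fine_div (delta : R -> R) (a b : R) (l : list (R * R * R)) : Prop :=
  match l with
  | nil => a = b
  | (u, w, c) :: l' =>
      u = a /\ u < w /\ u <= c /\ c <= w /\
      c - u < delta c /\ w - c < delta c /\ fine_div delta w b l'
  end.

Fixpoint rsum (f : R -> R) (l : list (R * R * R)) : R :=
  match l with
  | nil => 0
  | (u, w, c) :: l' => f c * (w - u) + rsum f l'
  end.

Definition HK_int (f : R -> R) (a b I : R) : Prop :=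
  a <= b /\
  forall eps, 0 < eps ->
    exists delta : R -> R, (forall x, 0 < delta x) /\
      forall l, fine_div delta a b l -> Rabs (rsum f l - I) < eps.

Definition L_int (f : R -> R) (a b I : R) : Prop :=
  HK_int f a b I /\ exists J, HK_int (fun x => Rabs (f x)) a b J.

Definition L_integrable (f : R -> R) (a b : R) : Prop :=
  exists I, L_int f a b I.

Definition L_measurable (f : R -> R) (a b : R) : Prop :=
  forall M, 0 < M -> L_integrable (fun x => Rmax (- M) (Rmin M (f x))) a b.

Definition L2 (f : R -> R) (a b : R) : Prop :=
  L_measurable f a b /\ L_integrable (fun x => (f x) ^ 2) a b.

(* v in L^2([0,1], H^1_0([0,1])), v t x = v(t)(x) (a representative with
   v(t) in H^1_0 for every t). g t is the weak derivative of v t. *)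
Definition L2_H10 (v : R -> R -> R) : Prop :=
  exists g : R -> R -> R,
    (forall t, 0 <= t <= 1 ->
       L2 (g t) 0 1 /\
       (forall x, 0 <= x <= 1 -> L_int (g t) 0 x (v t x)) /\
       v t 1 = 0) /\
    (forall x, 0 <= x <= 1 -> L_measurable (fun t => v t x) 0 1) /\
    exists n : R -> R,
      (forall t, 0 <= t <= 1 -> L_int (fun y => (g t y) ^ 2) 0 1 (n t)) /\
      L_integrable n 0 1.

Fixpoint ordered_intervals (l : list (R * R)) : Prop :=
  match l with
  | nil => True
  | p :: l' =>
      fst p <= snd p /\
      (match l' with nil => True | q :: _ => snd p <= fst q end) /\
      ordered_intervals l'
  end.

Definition abs_cont (f : R -> R) (a b : R) : Prop :=
  forall eps, 0 < eps -> exists delta, 0 < delta /\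
    forall l : list (R * R),
      Forall (fun p => a <= fst p /\ snd p <= b) l ->
      ordered_intervals l ->
      fold_right (fun p s => (snd p - fst p) + s) 0 l < delta ->
      fold_right (fun p s => Rabs (f (snd p) - f (fst p)) + s) 0 l < eps.

Definition Mon_plus (f : R -> R) : Prop :=
  (forall x y, 0 <= x -> x <= y -> y <= 1 -> f x <= f y) /\
  (forall x, 0 <= x <= 1 -> 0 <= f x <= 1) /\
  f 0 = 0 /\ f 1 = 1.

Definition lagrangian_flow (v : R -> R -> R) (phi : R -> R -> R) : Prop :=
  (forall t x, 0 <= t <= 1 -> 0 <= x <= 1 -> 0 <= phi t x <= 1) /\
  (forall t x y, 0 <= t <= 1 -> 0 <= x -> x <= y -> y <= 1 ->
     phi t x <= phi t y) /\
  (forall x, 0 <= x <= 1 ->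
     abs_cont (fun t => phi t x) 0 1 /\
     forall s t, 0 <= s -> s < t -> t <= 1 ->
       L_int (fun r => v r (phi r x)) s t (phi t x - phi s x)).

Definition flow_rel (phi0 phi1 : R -> R) : Prop :=
  exists v, L2_H10 v /\
    exists phi, lagrangian_flow v phi /\
      forall x, 0 <= x <= 1 -> phi 0 x = phi0 x /\ phi 1 x = phi1 x.

(* The relation is total, which makes symmetry and transitivity immediate.
   Given phi0, phi1 in Mon_+, the map
     phi(t, x) = 1/2 + (phi_i(x) - 1/2) (1 - (1 - (1 - 2 t)^2)^2),
   with i = 0 for t <= 1/2 and i = 1 afterwards, contracts [0, 1] onto 1/2 at
   t = 1/2 and then expands it onto phi1.  It is the Lagrangian flow of a
   velocity field that is piecewise affine in x and whose H^1 energy stays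
   bounded although the band swept by the trajectories collapses at t = 1/2.
   All integrals are gauge integrals, evaluated through the straddle lemma
   from a primitive that is Lipschitz and differentiable off finitely many
   points. *)

From Stdlib Require Import Reals Lra List Classical ClassicalEpsilon FunctionalExtensionality.
From Coquelicot Require Import Coquelicot.
Open Scope R_scope.

(** * Gauge integrals *)

Lemma fine_div_le delta a b l : fine_div delta a b l -> a <= b.
Proof.
  revert a; induction l as [|[[u w] c] l IH]; simpl; intros a H.
  - lra.
  - destruct H as (-> & Huw & _ & _ & _ & _ & Hl); specialize (IH _ Hl); lra.
Qed.

(* Length of (p - delta p, p + delta p) intersected with (a, +oo).  A
   subinterval [u, w] of a fine division tagged by p consumes w - u of this
   budget as a moves from u to w, so the subintervals tagged by points of P
   have total length at most 2 |P| max_P delta. *)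
Definition ball_tail (delta : R -> R) (p a : R) : R :=
  Rmax 0 (p + delta p - Rmax a (p - delta p)).

Definition balls_tail (delta : R -> R) (P : list R) (a : R) : R :=
  fold_right (fun p s => ball_tail delta p a + s) 0 P.

Lemma ball_tail_ge0 delta p a : 0 <= ball_tail delta p a.
Proof. apply Rmax_l. Qed.

Lemma ball_tail_le_compat delta p a a' :
  a <= a' -> ball_tail delta p a' <= ball_tail delta p a.
Proof. intros. unfold ball_tail, Rmax; repeat destruct Rle_dec; lra. Qed.

Lemma ball_tail_consume delta c u w :
  u <= c -> c <= w -> c - u < delta c -> w - c < delta c ->
  (w - u) + ball_tail delta c w <= ball_tail delta c u.
Proof. intros. unfold ball_tail, Rmax; repeat destruct Rle_dec; lra. Qed.

Lemma ball_tail_le delta p a : 0 < delta p -> ball_tail delta p a <= 2 * delta p.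
Proof. intros. unfold ball_tail, Rmax; repeat destruct Rle_dec; lra. Qed.

Lemma balls_tail_ge0 delta P a : 0 <= balls_tail delta P a.
Proof.
  induction P as [|p P IH]; simpl; [lra|].
  pose proof (ball_tail_ge0 delta p a); lra.
Qed.

Lemma balls_tail_le_compat delta P a a' :
  a <= a' -> balls_tail delta P a' <= balls_tail delta P a.
Proof.
  intros Ha; induction P as [|p P IH]; simpl; [lra|].
  pose proof (ball_tail_le_compat delta p _ _ Ha); lra.
Qed.

Lemma balls_tail_consume delta P c u w :
  In c P -> u <= c -> c <= w -> c - u < delta c -> w - c < delta c ->
  (w - u) + balls_tail delta P w <= balls_tail delta P u.
Proof.
  intros Hc Huc Hcw Hu Hw; induction P as [|p P IH]; simpl in *; [contradiction|].
  destruct Hc as [-> | Hc].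
  - pose proof (ball_tail_consume delta c u w Huc Hcw Hu Hw).
    pose proof (balls_tail_le_compat delta P u w ltac:(lra)); lra.
  - pose proof (IH Hc); pose proof (ball_tail_le_compat delta p u w ltac:(lra)); lra.
Qed.

Lemma balls_tail_le delta P a eta :
  (forall p, In p P -> 0 < delta p <= eta) ->
  balls_tail delta P a <= INR (length P) * (2 * eta).
Proof.
  induction P as [|p P IH]; intros HP; simpl length; [simpl; lra|].
  rewrite S_INR; simpl balls_tail.
  destruct (HP p (or_introl eq_refl)).
  pose proof (ball_tail_le delta p a ltac:(lra)).
  specialize (IH (fun q Hq => HP q (or_intror Hq))); unfold balls_tail in *; lra.
Qed.

Definition straddle (f F : R -> R) (a b c K d : R) : Prop :=
  forall u w, a <= u -> u <= c -> c <= w -> w <= b -> w - u < d ->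
    Rabs (F w - F u - f c * (w - u)) <= K * (w - u).

Lemma straddle_le_compat f F a b c K d d' :
  d' <= d -> straddle f F a b c K d -> straddle f F a b c K d'.
Proof. intros Hd H u w ? ? ? ? ?; apply H; lra. Qed.

Lemma rsum_error_le f F delta (P : list R) a b e K :
  0 <= e -> 0 <= K ->
  (forall c, a <= c <= b -> ~ In c P -> straddle f F a b c e (2 * delta c)) ->
  (forall c, a <= c <= b -> In c P -> straddle f F a b c K (2 * delta c)) ->
  forall a' l, a <= a' -> fine_div delta a' b l ->
  Rabs (rsum f l - (F b - F a')) <= e * (b - a') + K * balls_tail delta P a'.
Proof.
  intros He HK Hreg Hexc a' l; revert a'.
  induction l as [|[[u w] c] l IH]; simpl; intros a' Ha' Hl.
  - subst; pose proof (balls_tail_ge0 delta P b).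
    replace (0 - (F b - F b)) with 0 by ring; rewrite Rabs_R0; nra.
  - destruct Hl as (<- & Huw & Huc & Hcw & Hcu & Hwc & Hl).
    pose proof (fine_div_le _ _ _ _ Hl) as Hwb.
    specialize (IH w ltac:(lra) Hl).
    replace (f c * (w - u) + rsum f l - (F b - F u))
      with (- (F w - F u - f c * (w - u)) + (rsum f l - (F b - F w))) by ring.
    eapply Rle_trans; [apply Rabs_triang|]; rewrite Rabs_Ropp.
    destruct (classic (In c P)) as [Hin|Hin].
    + assert (Hc := Hexc c ltac:(lra) Hin u w ltac:(lra) Huc Hcw Hwb ltac:(lra)).
      pose proof (balls_tail_consume delta P c u w Hin Huc Hcw Hcu Hwc); nra.
    + assert (Hc := Hreg c ltac:(lra) Hin u w ltac:(lra) Huc Hcw Hwb ltac:(lra)).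
      pose proof (balls_tail_le_compat delta P u w ltac:(lra)); nra.
Qed.

Lemma straddle_gauge f F a b (P : list R) K e eta :
  0 < eta ->
  (forall c, a <= c <= b -> ~ In c P -> exists d, 0 < d /\ straddle f F a b c e d) ->
  (forall c, a <= c <= b -> In c P -> exists d, 0 < d /\ straddle f F a b c K d) ->
  exists delta : R -> R, (forall x, 0 < delta x) /\ (forall p, In p P -> delta p <= eta) /\
    (forall c, a <= c <= b -> ~ In c P -> straddle f F a b c e (2 * delta c)) /\
    (forall c, a <= c <= b -> In c P -> straddle f F a b c K (2 * delta c)).
Proof.
  intros Heta Hreg Hexc.
  destruct (choice (fun c d => 0 < d /\ (In c P -> d <= eta) /\
      (a <= c <= b -> ~ In c P -> straddle f F a b c e (2 * d)) /\
      (a <= c <= b -> In c P -> straddle f F a b c K (2 * d)))) as [delta Hdelta].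
  - intros c; destruct (classic (a <= c <= b)) as [Hc|Hc];
      [destruct (classic (In c P)) as [Hin|Hin]|].
    + destruct (Hexc c Hc Hin) as (d & Hd & Hs).
      exists (Rmin (d / 2) eta); repeat split; try tauto.
      * apply Rmin_glb_lt; lra.
      * intros; apply Rmin_r.
      * intros _ _; apply (straddle_le_compat _ _ _ _ _ _ d); [|exact Hs].
        pose proof (Rmin_l (d / 2) eta); lra.
    + destruct (Hreg c Hc Hin) as (d & Hd & Hs).
      exists (d / 2); repeat split; try tauto; [lra|].
      intros _ _; apply (straddle_le_compat _ _ _ _ _ _ d); [lra|exact Hs].
    + exists eta; repeat split; tauto || lra.
  - exists delta; repeat split; intros; apply Hdelta; assumption.
Qed.

Lemma small_factor A eps : 0 <= A -> 0 < eps -> 0 < eps / (A + 1) /\ A * (eps / (A + 1)) < eps.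
Proof.
  intros HA Heps; split; [apply Rdiv_lt_0_compat; lra|].
  apply (Rmult_lt_reg_r (A + 1)); [lra|]; field_simplify; lra.
Qed.

Lemma HK_int_of_straddle f F a b (P : list R) K :
  a <= b -> 0 <= K ->
  (forall c, a <= c <= b -> ~ In c P -> forall eps, 0 < eps ->
     exists d, 0 < d /\ straddle f F a b c eps d) ->
  (forall c, a <= c <= b -> In c P -> exists d, 0 < d /\ straddle f F a b c K d) ->
  HK_int f a b (F b - F a).
Proof.
  intros Hab HK Hreg Hexc; split; [exact Hab|]; intros eps Heps.
  set (n := INR (length P)); assert (0 <= n) by apply pos_INR.
  destruct (small_factor (b - a) (eps / 2) ltac:(lra) ltac:(lra)) as [He Hea].
  destruct (small_factor (2 * K * n) (eps / 2) ltac:(nra) ltac:(lra)) as [Heta HetaK].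
  set (e := eps / 2 / (b - a + 1)) in *; set (eta := eps / 2 / (2 * K * n + 1)) in *.
  destruct (straddle_gauge f F a b P K e eta Heta (fun c Hc Hin => Hreg c Hc Hin e He) Hexc)
    as (delta & Hpos & Hsmall & Hreg' & Hexc').
  exists delta; split; [exact Hpos|]; intros l Hl.
  pose proof (rsum_error_le f F delta P a b e K ltac:(lra) HK Hreg' Hexc' a l (Rle_refl a) Hl)
    as Herr.
  pose proof (balls_tail_le delta P a eta (fun p Hp => conj (Hpos p) (Hsmall p Hp))) as Hballs.
  assert (K * balls_tail delta P a <= K * (n * (2 * eta))) by
    (apply Rmult_le_compat_l; [exact HK|exact Hballs]).
  nra.
Qed.

Lemma is_derive_remainder_le H c l eps :
  is_derive H c l -> 0 < eps ->
  exists d, 0 < d /\ forall y, Rabs (y - c) < d ->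
    Rabs (H y - H c - l * (y - c)) <= eps * Rabs (y - c).
Proof.
  intros Hd He; apply is_derive_Reals in Hd.
  destruct (Hd eps He) as [d Hd']; exists d; split; [apply cond_pos|].
  intros y Hy; destruct (Req_dec y c) as [->|Hyc].
  - replace (H c - H c - l * (c - c)) with 0 by ring; rewrite Rabs_R0.
    apply Rmult_le_pos; [lra|apply Rabs_pos].
  - specialize (Hd' (y - c) ltac:(lra) Hy); replace (c + (y - c)) with y in Hd' by ring.
    replace (H y - H c - l * (y - c)) with (((H y - H c) / (y - c) - l) * (y - c)) by (field; lra).
    rewrite Rabs_mult; apply Rmult_le_compat_r; [apply Rabs_pos|lra].
Qed.

Lemma straddle_of_is_derive f F H a b c d0 :
  is_derive H c (f c) -> 0 < d0 ->
  (forall y, a <= y <= b -> Rabs (y - c) < d0 -> F y = H y) ->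
  forall eps, 0 < eps -> exists d, 0 < d /\ straddle f F a b c eps d.
Proof.
  intros Hd Hd0 HFH eps Heps.
  destruct (is_derive_remainder_le H c (f c) eps Hd Heps) as (d & Hd1 & Hrem).
  exists (Rmin d d0); split; [apply Rmin_glb_lt; lra|].
  intros u w Hu Huc Hcw Hw Hwu.
  pose proof (Rmin_l d d0); pose proof (Rmin_r d d0).
  assert (Hu' : Rabs (u - c) = c - u) by (rewrite Rabs_left1; lra).
  assert (Hw' : Rabs (w - c) = w - c) by (rewrite Rabs_right; lra).
  rewrite (HFH u ltac:(lra) ltac:(lra)), (HFH w ltac:(lra) ltac:(lra)).
  pose proof (Hrem u ltac:(lra)) as Hremu; pose proof (Hrem w ltac:(lra)) as Hremw.
  rewrite Hu' in Hremu; rewrite Hw' in Hremw.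
  replace (H w - H u - f c * (w - u))
    with ((H w - H c - f c * (w - c)) - (H u - H c - f c * (u - c))) by ring.
  eapply Rle_trans; [apply Rabs_triang|]; rewrite Rabs_Ropp; nra.
Qed.

Definition lipschitz_on (F : R -> R) (a b L : R) : Prop :=
  forall u w, a <= u -> u <= w -> w <= b -> Rabs (F w - F u) <= L * (w - u).

Lemma straddle_of_lipschitz f F a b c L M d :
  lipschitz_on F a b L -> Rabs (f c) <= M -> straddle f F a b c (L + M) d.
Proof.
  intros HL HM u w Hu Huc Hcw Hw _.
  specialize (HL u w Hu ltac:(lra) Hw).
  eapply Rle_trans; [apply Rabs_triang|].
  rewrite Rabs_Ropp, Rabs_mult, (Rabs_right (w - u)) by lra; nra.
Qed.

Lemma HK_int_of_local_primitive f F a b (P : list R) L M :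
  a <= b -> 0 <= L -> 0 <= M -> lipschitz_on F a b L ->
  (forall c, a <= c <= b -> In c P -> Rabs (f c) <= M) ->
  (forall c, a <= c <= b -> ~ In c P -> exists H d, 0 < d /\ is_derive H c (f c) /\
     forall y, a <= y <= b -> Rabs (y - c) < d -> F y = H y) ->
  HK_int f a b (F b - F a).
Proof.
  intros Hab HL HM HF Hexc Hreg.
  apply (HK_int_of_straddle f F a b P (L + M)); [lra|lra| |].
  - intros c Hc Hin; destruct (Hreg c Hc Hin) as (H & d & Hd & HHd & HFH).
    exact (straddle_of_is_derive f F H a b c d HHd Hd HFH).
  - intros c Hc Hin; exists 1; split; [lra|].
    exact (straddle_of_lipschitz f F a b c L M 1 HF (Hexc c Hc Hin)).
Qed.

(** * Three-piece step functions *)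

Definition step3 (p1 p2 k1 k2 k3 y : R) : R :=
  if Rlt_dec y p1 then k1 else if Rle_dec y p2 then k2 else k3.

Definition step3_prim (p1 p2 k1 k2 k3 y : R) : R :=
  k1 * Rmin y p1 + k2 * (Rmin (Rmax y p1) p2 - p1) + k3 * (Rmax y p2 - p2).

Lemma step3_comp (h : R -> R) p1 p2 k1 k2 k3 :
  (fun y => h (step3 p1 p2 k1 k2 k3 y)) = step3 p1 p2 (h k1) (h k2) (h k3).
Proof.
  apply functional_extensionality; intros y; unfold step3.
  repeat destruct Rlt_dec; repeat destruct Rle_dec; reflexivity.
Qed.

Lemma step3_prim_0 p1 p2 k1 k2 k3 : 0 <= p1 <= p2 -> step3_prim p1 p2 k1 k2 k3 0 = 0.
Proof.
  intros; unfold step3_prim.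
  rewrite Rmin_left, Rmax_right, Rmin_left, Rmax_right by lra; ring.
Qed.

Lemma step3_prim_1 p1 p2 k1 k2 k3 :
  p1 <= p2 <= 1 -> step3_prim p1 p2 k1 k2 k3 1 = k1 * p1 + k2 * (p2 - p1) + k3 * (1 - p2).
Proof.
  intros; unfold step3_prim.
  rewrite Rmin_right, Rmax_left, Rmin_right, Rmax_left by lra; ring.
Qed.

Lemma step3_prim_lipschitz p1 p2 k1 k2 k3 a b : p1 <= p2 ->
  lipschitz_on (step3_prim p1 p2 k1 k2 k3) a b (Rabs k1 + Rabs k2 + Rabs k3).
Proof.
  intros Hp u w _ Huw _; unfold step3_prim.
  set (d1 := Rmin w p1 - Rmin u p1).
  set (d2 := Rmin (Rmax w p1) p2 - Rmin (Rmax u p1) p2).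
  set (d3 := Rmax w p2 - Rmax u p2).
  assert (0 <= d1 <= w - u) by (unfold d1, Rmin; repeat destruct Rle_dec; lra).
  assert (0 <= d2 <= w - u) by (unfold d2, Rmin, Rmax; repeat destruct Rle_dec; lra).
  assert (0 <= d3 <= w - u) by (unfold d3, Rmax; repeat destruct Rle_dec; lra).
  match goal with |- Rabs ?x <= _ => replace x with (k1 * d1 + k2 * d2 + k3 * d3)
    by (unfold d1, d2, d3; ring) end.
  eapply Rle_trans; [apply Rabs_triang|].
  eapply Rle_trans; [apply Rplus_le_compat_r, Rabs_triang|].
  rewrite !Rabs_mult, (Rabs_right d1), (Rabs_right d2), (Rabs_right d3) by lra.
  pose proof (Rabs_pos k1); pose proof (Rabs_pos k2); pose proof (Rabs_pos k3); nra.
Qed.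

Lemma step3_prim_affine_near p1 p2 k1 k2 k3 c y : p1 <= p2 ->
  Rabs (y - c) < Rmin (Rabs (c - p1)) (Rabs (c - p2)) ->
  step3_prim p1 p2 k1 k2 k3 y =
  step3_prim p1 p2 k1 k2 k3 c + step3 p1 p2 k1 k2 k3 c * (y - c).
Proof.
  intros Hp Hy.
  assert (Hy1 : Rabs (y - c) < Rabs (c - p1)) by (eapply Rlt_le_trans; [exact Hy|apply Rmin_l]).
  assert (Hy2 : Rabs (y - c) < Rabs (c - p2)) by (eapply Rlt_le_trans; [exact Hy|apply Rmin_r]).
  revert Hy1 Hy2; unfold step3_prim, step3, Rabs, Rmin, Rmax.
  repeat destruct Rcase_abs; repeat destruct Rlt_dec; repeat destruct Rle_dec; intros; lra.
Qed.

Lemma step3_HK_int p1 p2 k1 k2 k3 a b : p1 <= p2 -> a <= b ->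
  HK_int (step3 p1 p2 k1 k2 k3) a b
    (step3_prim p1 p2 k1 k2 k3 b - step3_prim p1 p2 k1 k2 k3 a).
Proof.
  intros Hp Hab; set (S := Rabs k1 + Rabs k2 + Rabs k3).
  assert (HS : forall y, Rabs (step3 p1 p2 k1 k2 k3 y) <= S).
  { intros y; pose proof (Rabs_pos k1); pose proof (Rabs_pos k2); pose proof (Rabs_pos k3).
    unfold S, step3; repeat destruct Rlt_dec; repeat destruct Rle_dec; lra. }
  assert (0 <= S) by exact (Rle_trans _ _ _ (Rabs_pos _) (HS 0)).
  apply (HK_int_of_local_primitive _ _ a b (p1 :: p2 :: nil) S S); try assumption.
  - apply step3_prim_lipschitz; assumption.
  - intros c _ _; apply HS.
  - intros c _ Hin.
    assert (c <> p1 /\ c <> p2) as [Hc1 Hc2] by (simpl in Hin; split; intros ->; tauto).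
    exists (fun y => step3_prim p1 p2 k1 k2 k3 c + step3 p1 p2 k1 k2 k3 c * (y - c)).
    exists (Rmin (Rabs (c - p1)) (Rabs (c - p2))); split; [|split].
    + apply Rmin_glb_lt; apply Rabs_pos_lt; lra.
    + auto_derive; [trivial|ring].
    + intros y _ Hy; apply step3_prim_affine_near; assumption.
Qed.

Lemma step3_L_int p1 p2 k1 k2 k3 a b : p1 <= p2 -> a <= b ->
  L_int (step3 p1 p2 k1 k2 k3) a b
    (step3_prim p1 p2 k1 k2 k3 b - step3_prim p1 p2 k1 k2 k3 a).
Proof.
  intros; split; [apply step3_HK_int; assumption|].
  rewrite (step3_comp Rabs); eexists; apply step3_HK_int; assumption.
Qed.

Lemma step3_comp_L_integrable (h : R -> R) p1 p2 k1 k2 k3 a b : p1 <= p2 -> a <= b ->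
  L_integrable (fun y => h (step3 p1 p2 k1 k2 k3 y)) a b.
Proof. intros; rewrite step3_comp; eexists; apply step3_L_int; assumption. Qed.

Lemma step3_L2 p1 p2 k1 k2 k3 a b : p1 <= p2 -> a <= b -> L2 (step3 p1 p2 k1 k2 k3) a b.
Proof.
  intros; split.
  - intros M _; apply (step3_comp_L_integrable (fun z => Rmax (- M) (Rmin M z))); assumption.
  - apply (step3_comp_L_integrable (fun z => z ^ 2)); assumption.
Qed.

(** * Continuous and Lipschitz functions *)

Lemma continuous_of_lipschitz (g : R -> R) L x : 0 < L ->
  (forall y, Rabs (g y - g x) <= L * Rabs (y - x)) -> continuous g x.
Proof.
  intros HL Hg; apply continuity_pt_filterlim; intros eps Heps.
  exists (eps / L); split; [apply Rdiv_lt_0_compat; lra|].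
  intros y [_ Hy]; simpl in *; unfold R_dist in *.
  eapply Rle_lt_trans; [apply Hg|].
  apply (Rmult_lt_compat_l L) in Hy; [|lra]; field_simplify in Hy; lra.
Qed.

Definition clamp (a b y : R) : R := Rmax a (Rmin b y).

Lemma clamp_continuous a b x : continuous (clamp a b) x.
Proof.
  apply (continuous_of_lipschitz _ 1); [lra|]; intros y; unfold clamp, Rmax, Rmin.
  repeat destruct Rle_dec; unfold Rabs; repeat destruct Rcase_abs; lra.
Qed.

Lemma clamp_id a b y : a <= y <= b -> clamp a b y = y.
Proof. intros; unfold clamp, Rmax, Rmin; repeat destruct Rle_dec; lra. Qed.

Lemma clamp_range a b y : a <= b -> a <= clamp a b y <= b.
Proof. intros; unfold clamp, Rmax, Rmin; repeat destruct Rle_dec; lra. Qed.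

Lemma RInt_lipschitz (g : R -> R) a b M : (forall y, continuous g y) ->
  (forall y, a <= y <= b -> Rabs (g y) <= M) -> lipschitz_on (RInt g a) a b M.
Proof.
  intros Hg HM u w Hu Huw Hw.
  assert (Hint : forall x y, ex_RInt g x y)
    by (intros; apply (@ex_RInt_continuous R_CompleteNormedModule); intros; apply Hg).
  rewrite <- (RInt_Chasles g a u w (Hint _ _) (Hint _ _)).
  assert (Hplus : forall x y : R, plus x y - x = y) by (intros; unfold plus; simpl; ring).
  rewrite Hplus.
  rewrite Rmult_comm; apply abs_RInt_le_const; [lra|apply Hint|intros; apply HM; lra].
Qed.

Lemma HK_int_RInt_except (f g : R -> R) a b (P : list R) M :
  a <= b -> 0 <= M -> (forall y, continuous g y) ->
  (forall c, a <= c <= b -> ~ In c P -> f c = g c) ->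
  (forall c, a <= c <= b -> In c P -> Rabs (f c) <= M) ->
  HK_int f a b (RInt g a b).
Proof.
  intros Hab HM Hg Hfg Hexc.
  destruct (continuity_ab_maj (fun y => Rabs (g y)) a b Hab) as (ymax & Hmax & _).
  { intros c _; apply continuity_pt_filterlim, continuous_Rabs_comp, Hg. }
  replace (RInt g a b) with (RInt g a b - RInt g a a)
    by (rewrite (RInt_point a g); unfold zero; simpl; ring).
  apply (HK_int_of_local_primitive f (RInt g a) a b P (Rabs (g ymax)) M);
    try assumption; [apply Rabs_pos|apply RInt_lipschitz; assumption|].
  intros c Hc Hin; exists (RInt g a), 1; split; [lra|split; [|reflexivity]].
  rewrite Hfg by assumption.
  apply (is_derive_RInt g (RInt g a) a c); [|apply Hg].
  apply filter_forall; intros y; apply (RInt_correct g a y).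
  apply (@ex_RInt_continuous R_CompleteNormedModule); intros; apply Hg.
Qed.

Lemma HK_int_continuous (f : R -> R) a b : a <= b ->
  (forall c, a <= c <= b -> continuous f c) ->
  HK_int f a b (RInt (fun y => f (clamp a b y)) a b).
Proof.
  intros Hab Hf; apply (HK_int_RInt_except _ _ a b nil 0); try (simpl; tauto || lra).
  - intros y; apply (continuous_comp (clamp a b) f); [apply clamp_continuous|].
    apply Hf, clamp_range, Hab.
  - intros c Hc _; rewrite clamp_id by assumption; reflexivity.
Qed.

Lemma L_integrable_continuous (f : R -> R) a b : a <= b ->
  (forall c, a <= c <= b -> continuous f c) -> L_integrable f a b.
Proof.
  intros Hab Hf; eexists; split; [apply HK_int_continuous; assumption|].
  eexists; apply HK_int_continuous; [assumption|].
  intros c Hc; apply continuous_Rabs_comp, Hf, Hc.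
Qed.

Lemma L_measurable_continuous (f : R -> R) a b : a <= b ->
  (forall c, a <= c <= b -> continuous f c) -> L_measurable f a b.
Proof.
  intros Hab Hf M _; apply L_integrable_continuous; [assumption|].
  intros c Hc; apply (continuous_comp f (clamp (- M) M)); [apply Hf, Hc|apply clamp_continuous].
Qed.

Lemma lipschitz_interval_sums (f : R -> R) a b L (l : list (R * R)) : 0 <= L ->
  lipschitz_on f a b L ->
  List.Forall (fun p => a <= fst p /\ snd p <= b) l -> ordered_intervals l ->
  0 <= fold_right (fun p s => (snd p - fst p) + s) 0 l /\
  fold_right (fun p s => Rabs (f (snd p) - f (fst p)) + s) 0 l <=
  L * fold_right (fun p s => (snd p - fst p) + s) 0 l.
Proof.
  intros HL Hf; induction l as [|p l IH]; simpl; intros Hl Ho; [lra|].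
  inversion Hl as [|? ? Hp Hl']; subst; destruct Ho as (Hp' & _ & Ho).
  destruct (IH Hl' Ho); specialize (Hf (fst p) (snd p) ltac:(tauto) Hp' ltac:(tauto)); nra.
Qed.

Lemma abs_cont_of_lipschitz (f : R -> R) a b L : 0 <= L ->
  lipschitz_on f a b L -> abs_cont f a b.
Proof.
  intros HL Hf eps Heps; destruct (small_factor L eps HL Heps) as [Hd Hsmall].
  exists (eps / (L + 1)); split; [exact Hd|]; intros l Hl Ho Hs.
  destruct (lipschitz_interval_sums f a b L l HL Hf Hl Ho) as [H0 H1].
  assert (L * fold_right (fun p s => (snd p - fst p) + s) 0 l <= L * (eps / (L + 1)))
    by (apply Rmult_le_compat_l; lra).
  lra.
Qed.

Lemma continuous_Rmax_comp (f g : R -> R) x : continuous f x -> continuous g x ->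
  continuous (fun y => Rmax (f y) (g y)) x.
Proof.
  intros Hf Hg.
  apply (continuous_ext (fun y => (f y + g y + Rabs (f y - g y)) * / 2)).
  { intros y; unfold Rmax; destruct Rle_dec; unfold Rabs; destruct Rcase_abs; lra. }
  apply (continuous_mult (fun y => f y + g y + Rabs (f y - g y)) (fun _ => / 2));
    [|apply continuous_const].
  apply (continuous_plus (fun y => f y + g y) (fun y => Rabs (f y - g y))).
  - apply (continuous_plus f g); assumption.
  - apply continuous_Rabs_comp, (continuous_minus f g); assumption.
Qed.

Lemma continuous_of_ex_derive (f : R -> R) x : ex_derive f x -> continuous f x.
Proof. apply (@ex_derive_continuous R_AbsRing R_NormedModule). Qed.

(** * The velocity field *)

(* The velocity profile at parameter e = 1 - 2 t.  The trajectories
   y = 1/2 + (z - 1/2) (1 - alpha e ^ 2), z in [0, 1], sweep the middle band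
   [layer e, 1 - layer e], on which the profile is affine with the slope that
   moves them at the speed (z - 1/2) * d/dt (1 - alpha e ^ 2); in the two
   boundary layers it is affine and vanishes at 0 and 1.  The choice
   alpha = 1 - e ^ 2 keeps the H^1 energy equal to 64 / (1 + alpha e), hence
   bounded, although the band collapses as e -> 0.  At e = 0, 1, -1 Rocq's
   division by 0 makes every slope, hence the profile, vanish. *)
Definition alpha (e : R) : R := 1 - e ^ 2.
Definition layer (e : R) : R := alpha e ^ 2 / 2.
Definition slope_out (e : R) : R := 8 * e / alpha e.
Definition slope_in (e : R) : R := -8 * alpha e / (e * (1 + alpha e)).

Definition profile (e : R) : R -> R :=
  step3_prim (layer e) (1 - layer e) (slope_out e) (slope_in e) (slope_out e).
Definition profile_slope (e : R) : R -> R :=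
  step3 (layer e) (1 - layer e) (slope_out e) (slope_in e) (slope_out e).
Definition profile_energy (e : R) : R :=
  step3_prim (layer e) (1 - layer e) (slope_out e ^ 2) (slope_in e ^ 2) (slope_out e ^ 2) 1.

Lemma alpha_range e : -1 <= e <= 1 -> 0 <= alpha e <= 1.
Proof. intros; unfold alpha; nra. Qed.

Lemma layer_range e : -1 <= e <= 1 -> 0 <= layer e <= 1/2.
Proof. intros He; pose proof (alpha_range e He); unfold layer; nra. Qed.

Lemma band_width e : 1 - 2 * layer e = e ^ 2 * (1 + alpha e).
Proof. unfold layer, alpha; field. Qed.

Lemma slope_out_layer e : slope_out e * layer e = 4 * e * alpha e.
Proof.
  unfold slope_out, layer; destruct (Req_dec (alpha e) 0) as [H|H].
  - rewrite H; unfold Rdiv; rewrite Rinv_0; ring.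
  - field; assumption.
Qed.

Lemma slope_in_band e : -1 <= e <= 1 -> slope_in e * (e ^ 2 * (1 + alpha e)) = -8 * alpha e * e.
Proof.
  intros He; pose proof (alpha_range e He); unfold slope_in.
  destruct (Req_dec e 0) as [->|He0].
  - replace (0 * (1 + alpha 0)) with 0 by ring; unfold Rdiv; rewrite Rinv_0; ring.
  - field; split; [lra|assumption].
Qed.

Lemma profile_on_trajectory e z : -1 <= e <= 1 -> 0 <= z <= 1 ->
  profile e (1/2 + (z - 1/2) * (1 - alpha e ^ 2)) = (z - 1/2) * (-8 * alpha e * e).
Proof.
  intros He Hz; pose proof (layer_range e He).
  replace (1 - alpha e ^ 2) with (1 - 2 * layer e) by (unfold layer; field).
  set (y := 1/2 + (z - 1/2) * (1 - 2 * layer e)).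
  assert (layer e <= y <= 1 - layer e) by (unfold y; nra).
  unfold profile, step3_prim.
  rewrite (Rmin_right y), (Rmax_left y), Rmin_left, (Rmax_right y) by lra.
  replace (y - layer e) with (z * (1 - 2 * layer e)) by (unfold y; field).
  rewrite band_width.
  replace (slope_out e * layer e + slope_in e * (z * (e ^ 2 * (1 + alpha e))) +
           slope_out e * (1 - layer e - (1 - layer e)))
    with (slope_out e * layer e + z * (slope_in e * (e ^ 2 * (1 + alpha e)))) by ring.
  rewrite slope_out_layer, slope_in_band by assumption; field.
Qed.

Lemma profile_0 e : -1 <= e <= 1 -> profile e 0 = 0.
Proof. intros He; pose proof (layer_range e He); apply step3_prim_0; lra. Qed.

Lemma profile_1 e : -1 <= e <= 1 -> profile e 1 = 0.
Proof.
  intros He; pose proof (layer_range e He); unfold profile; rewrite step3_prim_1 by lra.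
  replace (slope_out e * layer e + slope_in e * (1 - layer e - layer e) +
           slope_out e * (1 - (1 - layer e)))
    with (2 * (slope_out e * layer e) + slope_in e * (1 - 2 * layer e)) by ring.
  rewrite band_width, slope_out_layer, slope_in_band by assumption; ring.
Qed.

Lemma profile_energy_eq e : -1 < e < 1 -> e <> 0 -> profile_energy e = 64 / (1 + alpha e).
Proof.
  intros He He0; pose proof (layer_range e ltac:(lra)).
  assert (Ha : alpha e <> 0) by (unfold alpha; nra).
  assert (Ha1 : 1 + alpha e <> 0) by (unfold alpha; nra).
  unfold profile_energy; rewrite step3_prim_1 by lra.
  unfold slope_out, slope_in, layer; unfold alpha in *; field; repeat split; assumption.
Qed.

Lemma profile_energy_degenerate e : e = 0 \/ e = 1 \/ e = -1 -> profile_energy e = 0.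
Proof.
  intros He; assert (Hl : -1 <= e <= 1) by lra; pose proof (layer_range e Hl).
  unfold profile_energy; rewrite step3_prim_1 by lra.
  assert (E : alpha e = 0 \/ e = 0)
    by (unfold alpha; destruct He as [->|[->| ->]]; [right|left..]; ring).
  unfold slope_out, slope_in, layer.
  destruct E as [E| ->]; [rewrite E|replace (0 * (1 + alpha 0)) with 0 by ring];
    unfold Rdiv; rewrite Rinv_0; ring.
Qed.

(* A closed form in z = 1 - 2 y whose only divisions are by a quantity that is
   positive for 0 < |z| < 1; it shows that the profile depends continuously on e. *)
Definition profile_closed (e z : R) : R :=
  4 * e * alpha e * z * (1 - Rabs z) /
  Rmax (e ^ 2 * (1 + alpha e) * (1 - Rabs z)) (alpha e ^ 2 * Rabs z).

Lemma profile_eq_closed e y : -1 <= e <= 1 -> 0 <= y <= 1 ->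
  profile e y = profile_closed e (1 - 2 * y).
Proof.
  intros He Hy; pose proof (layer_range e He); pose proof (alpha_range e He).
  unfold profile_closed.
  destruct (classic (e = 0 \/ alpha e = 0)) as [Hdeg|Hdeg].
  - assert (Hz : slope_out e = 0 /\ slope_in e = 0).
    { unfold slope_out, slope_in; unfold Rdiv.
      destruct Hdeg as [-> | ->]; rewrite ?Rmult_0_l, ?Rinv_0; split; ring. }
    unfold profile, step3_prim; destruct Hz as [-> ->].
    destruct Hdeg as [-> | ->]; unfold Rdiv; ring.
  - assert (He0 : e <> 0) by tauto; assert (Ha : alpha e <> 0) by tauto.
    assert (Hea : e ^ 2 = 1 - alpha e) by (unfold alpha; ring).
    assert (Ha' : 0 < alpha e < 1) by (split; [lra|]; unfold alpha in *; nra).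
    assert (He2 : 0 < e ^ 2) by nra.
    assert (Ha2 : 0 <= alpha e ^ 2 <= alpha e) by (split; nra).
    unfold profile, step3_prim, layer, slope_out, slope_in.
    destruct (Rlt_dec y (alpha e ^ 2 / 2)) as [Hy1|Hy1];
      [|destruct (Rle_dec y (1 - alpha e ^ 2 / 2)) as [Hy2|Hy2]].
    + rewrite Rmin_left, Rmax_right, Rmin_left, Rmax_right by lra.
      rewrite Rabs_right by nra; rewrite Rmax_right by (rewrite Hea; nra).
      field; repeat split; lra.
    + rewrite Rmin_right, Rmax_left, Rmin_left, Rmax_right by lra.
      assert (Rabs (1 - 2 * y) <= 1 - alpha e ^ 2) by (apply Rabs_le; nra).
      pose proof (Rabs_pos (1 - 2 * y)).
      assert (0 < 1 - Rabs (1 - 2 * y)) by nra.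
      rewrite Rmax_left by (rewrite Hea; nra).
      replace (4 * e * alpha e * (1 - 2 * y) * (1 - Rabs (1 - 2 * y)) /
               (e ^ 2 * (1 + alpha e) * (1 - Rabs (1 - 2 * y))))
        with (4 * alpha e * (1 - 2 * y) / (e * (1 + alpha e))) by (field; repeat split; lra).
      unfold alpha in *; field; repeat split; lra.
    + rewrite Rmin_right, Rmax_left, Rmin_right, Rmax_left by lra.
      rewrite Rabs_left by nra; rewrite Rmax_right by (rewrite Hea; nra).
      unfold alpha in *; field; repeat split; lra.
Qed.

Lemma profile_closed_continuous z e : 0 < Rabs z < 1 -> -1 <= e <= 1 ->
  continuous (fun e => profile_closed e z) e.
Proof.
  intros Hz He; unfold profile_closed; set (r := Rabs z) in *.
  pose proof (alpha_range e He).
  assert (Hden : 0 < Rmax (e ^ 2 * (1 + alpha e) * (1 - r)) (alpha e ^ 2 * r)).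
  { destruct (Req_dec e 0) as [->|He0].
    - eapply Rlt_le_trans; [|apply Rmax_r]; unfold alpha; simpl; nra.
    - eapply Rlt_le_trans; [|apply Rmax_l].
      assert (0 < e ^ 2) by (simpl; rewrite Rmult_1_r; apply Rsqr_pos_lt, He0).
      apply Rmult_lt_0_compat; [apply Rmult_lt_0_compat|]; lra. }
  apply (continuous_mult (fun e => 4 * e * alpha e * z * (1 - r))
           (fun e => / Rmax (e ^ 2 * (1 + alpha e) * (1 - r)) (alpha e ^ 2 * r))).
  - apply continuous_of_ex_derive; unfold alpha; auto_derive; trivial.
  - apply continuous_Rinv_comp; [|lra].
    apply (continuous_Rmax_comp (fun e => e ^ 2 * (1 + alpha e) * (1 - r))
                                (fun e => alpha e ^ 2 * r));
      apply continuous_of_ex_derive; unfold alpha; auto_derive; trivial.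
Qed.

Lemma profile_closed_trivial e z : z = 0 \/ Rabs z = 1 -> profile_closed e z = 0.
Proof. intros [->|Hz]; unfold profile_closed; [|rewrite Hz]; unfold Rdiv; ring. Qed.

(* Clamping keeps every time-dependent quantity continuous on all of R. *)
Definition etime (t : R) : R := clamp (-1) 1 (1 - 2 * t).

Definition vfield (t y : R) : R := profile (etime t) y.

Lemma etime_range t : -1 <= etime t <= 1.
Proof. apply clamp_range; lra. Qed.

Lemma etime_id t : 0 <= t <= 1 -> etime t = 1 - 2 * t.
Proof. intros; apply clamp_id; lra. Qed.

Lemma etime_continuous t : continuous etime t.
Proof.
  apply (continuous_comp (fun t => 1 - 2 * t) (clamp (-1) 1)); [|apply clamp_continuous].
  apply continuous_of_ex_derive; auto_derive; trivial.
Qed.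

Lemma vfield_continuous_in_time x t : 0 <= x <= 1 -> continuous (fun t => vfield t x) t.
Proof.
  intros Hx.
  apply (continuous_ext (fun t => profile_closed (etime t) (1 - 2 * x))).
  { intros s; symmetry; apply profile_eq_closed; [apply etime_range|assumption]. }
  destruct (classic (0 < Rabs (1 - 2 * x) < 1)) as [Hz|Hz].
  - apply (continuous_comp etime (fun e => profile_closed e (1 - 2 * x)));
      [apply etime_continuous|apply profile_closed_continuous; [assumption|apply etime_range]].
  - apply (continuous_ext (fun _ => 0)); [|apply continuous_const].
    intros s; symmetry; apply profile_closed_trivial.
    assert (Rabs (1 - 2 * x) <= 1) by (apply Rabs_le; lra).
    destruct (Req_dec (1 - 2 * x) 0) as [E|E]; [left; exact E|right].
    pose proof (Rabs_pos_lt _ E); lra.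
Qed.

Definition energy_bound (t : R) : R := 64 / (1 + alpha (etime t)).

Lemma energy_bound_continuous t : continuous energy_bound t.
Proof.
  apply (continuous_comp etime (fun e => 64 / (1 + alpha e))); [apply etime_continuous|].
  pose proof (alpha_range _ (etime_range t)).
  apply continuous_of_ex_derive; unfold alpha in *; auto_derive; lra.
Qed.

Lemma energy_bound_pos t : 0 < energy_bound t.
Proof.
  pose proof (alpha_range _ (etime_range t)); apply Rdiv_lt_0_compat; lra.
Qed.

Lemma energy_eq_bound t : 0 <= t <= 1 -> ~ In t (0 :: 1/2 :: 1 :: nil) ->
  profile_energy (etime t) = energy_bound t.
Proof.
  intros Ht Hin; simpl in Hin; unfold energy_bound; rewrite etime_id by assumption.
  apply profile_energy_eq; [|lra]; split; apply Rnot_le_lt; intros H.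
  - apply Hin; right; right; left; lra.
  - apply Hin; left; lra.
Qed.

Lemma energy_at_exceptions t : In t (0 :: 1/2 :: 1 :: nil) -> profile_energy (etime t) = 0.
Proof.
  intros Hin; apply profile_energy_degenerate.
  simpl in Hin; destruct Hin as [<-|[<-|[<-|[]]]]; rewrite etime_id by lra; lra.
Qed.

Lemma energy_L_integrable : L_integrable (fun t => profile_energy (etime t)) 0 1.
Proof.
  exists (RInt energy_bound 0 1); split; [|exists (RInt energy_bound 0 1)];
    apply (HK_int_RInt_except _ _ 0 1 (0 :: 1/2 :: 1 :: nil) 0);
    try (lra || apply energy_bound_continuous).
  - intros c Hc Hin; apply energy_eq_bound; assumption.
  - intros c _ Hin; rewrite energy_at_exceptions, Rabs_R0 by assumption; lra.
  - intros c Hc Hin; rewrite energy_eq_bound by assumption.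
    apply Rabs_right, Rgt_ge, energy_bound_pos.
  - intros c _ Hin; rewrite energy_at_exceptions, !Rabs_R0 by assumption; lra.
Qed.

Lemma vfield_L2_H10 : L2_H10 vfield.
Proof.
  exists (fun t => profile_slope (etime t)).
  split; [|split].
  - intros t _; pose proof (layer_range _ (etime_range t)); split; [|split].
    + apply step3_L2; lra.
    + intros x Hx; unfold vfield; rewrite <- (Rminus_0_r (profile _ x)).
      rewrite <- (profile_0 (etime t)) at 2 by apply etime_range.
      apply step3_L_int; lra.
    + apply profile_1, etime_range.
  - intros x Hx; apply L_measurable_continuous; [lra|].
    intros; apply vfield_continuous_in_time; assumption.
  - exists (fun t => profile_energy (etime t)); split; [|exact energy_L_integrable].
    intros t _; pose proof (layer_range _ (etime_range t)).
    unfold profile_slope; rewrite (step3_comp (fun z => z ^ 2)).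
    unfold profile_energy; rewrite <- (Rminus_0_r (step3_prim _ _ _ _ _ 1)).
    rewrite <- (step3_prim_0 (layer (etime t)) (1 - layer (etime t))
                  (slope_out (etime t) ^ 2) (slope_in (etime t) ^ 2) (slope_out (etime t) ^ 2))
      at 2 by lra.
    apply step3_L_int; lra.
Qed.

(** * The flow *)

Definition contraction (t : R) : R := 1 - alpha (etime t) ^ 2.
Definition contraction_rate (t : R) : R := -8 * alpha (etime t) * etime t.

Definition contraction_poly (t : R) : R := 1 - (1 - (1 - 2 * t) ^ 2) ^ 2.

Lemma contraction_range t : 0 <= contraction t <= 1.
Proof. pose proof (alpha_range _ (etime_range t)); unfold contraction; nra. Qed.

Lemma contraction_eq_poly t : 0 <= t <= 1 -> contraction t = contraction_poly t.
Proof. intros; unfold contraction, alpha; rewrite etime_id by assumption; reflexivity. Qed.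

Lemma is_derive_contraction_poly t : is_derive contraction_poly t
  (-8 * (1 - (1 - 2 * t) ^ 2) * (1 - 2 * t)).
Proof. unfold contraction_poly; auto_derive; [trivial|ring]. Qed.

Lemma contraction_lipschitz s t : 0 <= s -> t <= 1 -> lipschitz_on contraction s t 8.
Proof.
  intros Hs Ht u w Hu Huw Hw.
  rewrite !contraction_eq_poly by lra.
  destruct (MVT_gen contraction_poly u w (fun c => -8 * (1 - (1 - 2 * c) ^ 2) * (1 - 2 * c)))
    as (c & Hc & Hmvt).
  { intros; apply is_derive_contraction_poly. }
  { intros; apply continuity_pt_filterlim, continuous_of_ex_derive.
    eexists; apply is_derive_contraction_poly. }
  rewrite Rmin_left, Rmax_right in Hc by lra.
  rewrite Hmvt, Rabs_mult, (Rabs_right (w - u)) by lra.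
  apply Rmult_le_compat_r; [lra|].
  assert (0 <= c * (1 - c)) by (apply Rmult_le_pos; lra).
  assert (0 <= 1 - (1 - 2 * c) ^ 2 <= 1) by (pose proof (pow2_ge_0 (1 - 2 * c)); nra).
  apply Rabs_le; split; nra.
Qed.

Lemma contraction_values : contraction 0 = 1 /\ contraction (1/2) = 0 /\ contraction 1 = 1.
Proof.
  unfold contraction, alpha; rewrite !etime_id by lra; repeat split; field.
Qed.

Definition flow_disp (b0 b1 t : R) : R :=
  (if Rle_dec t (1/2) then b0 else b1) * contraction t.
Definition flow_speed (b0 b1 t : R) : R :=
  (if Rle_dec t (1/2) then b0 else b1) * contraction_rate t.

Lemma flow_disp_lipschitz b0 b1 s t : 0 <= s -> t <= 1 ->
  lipschitz_on (flow_disp b0 b1) s t (8 * (Rabs b0 + Rabs b1)).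
Proof.
  intros Hs Ht u w Hu Huw Hw.
  pose proof (Rabs_pos b0); pose proof (Rabs_pos b1).
  assert (Hlip := contraction_lipschitz s t Hs Ht).
  unfold flow_disp; destruct (Rle_dec w (1/2)); destruct (Rle_dec u (1/2)); try lra.
  - rewrite <- Rmult_minus_distr_l, Rabs_mult; specialize (Hlip u w Hu Huw Hw); nra.
  - destruct contraction_values as (_ & Hhalf & _).
    pose proof (Hlip u (1/2) Hu ltac:(lra) ltac:(lra)) as Hu2.
    pose proof (Hlip (1/2) w ltac:(lra) ltac:(lra) Hw) as Hw2.
    rewrite Hhalf, Rminus_0_l, Rabs_Ropp in Hu2; rewrite Hhalf, Rminus_0_r in Hw2.
    eapply Rle_trans; [unfold Rminus; apply Rabs_triang|].
    rewrite Rabs_Ropp, !Rabs_mult.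
    pose proof (Rabs_pos (contraction u)); pose proof (Rabs_pos (contraction w)); nra.
  - rewrite <- Rmult_minus_distr_l, Rabs_mult; specialize (Hlip u w Hu Huw Hw); nra.
Qed.

Lemma flow_speed_half b0 b1 : flow_speed b0 b1 (1/2) = 0.
Proof.
  unfold flow_speed, contraction_rate; rewrite etime_id by lra.
  replace (1 - 2 * (1/2)) with 0 by field; ring.
Qed.

Lemma flow_disp_HK_int b0 b1 s t : 0 <= s -> s <= t -> t <= 1 ->
  HK_int (flow_speed b0 b1) s t (flow_disp b0 b1 t - flow_disp b0 b1 s).
Proof.
  intros Hs Hst Ht; pose proof (Rabs_pos b0); pose proof (Rabs_pos b1).
  apply (HK_int_of_local_primitive _ _ s t (1/2 :: nil) (8 * (Rabs b0 + Rabs b1)) 0);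
    [lra|lra|lra|apply flow_disp_lipschitz; assumption| |].
  - intros c _ [<-|[]]; rewrite flow_speed_half, Rabs_R0; lra.
  - intros c Hc Hin; assert (Hc2 : c <> 1/2) by (intros ->; apply Hin; left; reflexivity).
    set (b := if Rle_dec c (1/2) then b0 else b1).
    exists (fun y => b * contraction_poly y), (Rabs (c - 1/2)); split; [|split].
    + apply Rabs_pos_lt; lra.
    + replace (flow_speed b0 b1 c) with (b * (-8 * (1 - (1 - 2 * c) ^ 2) * (1 - 2 * c))).
      * apply is_derive_scal, is_derive_contraction_poly.
      * unfold flow_speed, contraction_rate, alpha, b; rewrite etime_id by lra; reflexivity.
    + intros y Hy Hyc; unfold flow_disp, b; rewrite contraction_eq_poly by lra.
      apply Rabs_def2 in Hyc; unfold Rabs in Hyc; destruct Rcase_abs in Hyc.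
      all: destruct (Rle_dec c (1/2)); destruct (Rle_dec y (1/2)); try reflexivity; lra.
Qed.

Lemma flow_speed_abs b0 b1 t : Rabs (flow_speed b0 b1 t) = flow_speed (- Rabs b0) (Rabs b1) t.
Proof.
  pose proof (alpha_range _ (etime_range t)).
  unfold flow_speed, contraction_rate; rewrite Rabs_mult; destruct (Rle_dec t (1/2)).
  - assert (0 <= etime t) by (unfold etime, clamp, Rmax, Rmin; repeat destruct Rle_dec; lra).
    rewrite (Rabs_left1 (-8 * _ * _)) by nra; ring.
  - assert (etime t <= 0) by (unfold etime, clamp, Rmax, Rmin; repeat destruct Rle_dec; lra).
    rewrite (Rabs_right (-8 * _ * _)) by nra; ring.
Qed.

Definition flow (phi0 phi1 : R -> R) (t x : R) : R :=
  1/2 + flow_disp (phi0 x - 1/2) (phi1 x - 1/2) t.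

Lemma vfield_along_flow phi0 phi1 t x : 0 <= phi0 x <= 1 -> 0 <= phi1 x <= 1 ->
  vfield t (flow phi0 phi1 t x) = flow_speed (phi0 x - 1/2) (phi1 x - 1/2) t.
Proof.
  intros H0 H1; unfold vfield, flow, flow_disp, flow_speed, contraction, contraction_rate.
  destruct Rle_dec; apply profile_on_trajectory; try apply etime_range; assumption.
Qed.

Lemma flow_L_int phi0 phi1 x s t : 0 <= phi0 x <= 1 -> 0 <= phi1 x <= 1 ->
  0 <= s -> s <= t -> t <= 1 ->
  L_int (fun r => vfield r (flow phi0 phi1 r x)) s t (flow phi0 phi1 t x - flow phi0 phi1 s x).
Proof.
  intros H0 H1 Hs Hst Ht.
  rewrite (functional_extensionality _ _ (fun r => vfield_along_flow phi0 phi1 r x H0 H1)).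
  set (b0 := phi0 x - 1/2); set (b1 := phi1 x - 1/2).
  replace (flow phi0 phi1 t x - flow phi0 phi1 s x)
    with (flow_disp b0 b1 t - flow_disp b0 b1 s) by (unfold flow, b0, b1; ring).
  split; [apply flow_disp_HK_int; assumption|].
  rewrite (functional_extensionality _ _ (flow_speed_abs b0 b1)).
  eexists; apply flow_disp_HK_int; assumption.
Qed.

Lemma flow_lagrangian phi0 phi1 : Mon_plus phi0 -> Mon_plus phi1 ->
  lagrangian_flow vfield (flow phi0 phi1).
Proof.
  intros (Hmono0 & Hrange0 & _) (Hmono1 & Hrange1 & _); split; [|split].
  - intros t x _ Hx; specialize (Hrange0 x Hx); specialize (Hrange1 x Hx).
    pose proof (contraction_range t); unfold flow, flow_disp.
    destruct Rle_dec; split; nra.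
  - intros t x y _ Hx Hxy Hy; pose proof (contraction_range t); unfold flow, flow_disp.
    destruct Rle_dec; [specialize (Hmono0 x y Hx Hxy Hy)|specialize (Hmono1 x y Hx Hxy Hy)]; nra.
  - intros x Hx; specialize (Hrange0 x Hx); specialize (Hrange1 x Hx); split.
    + apply (abs_cont_of_lipschitz _ 0 1 (8 * (Rabs (phi0 x - 1/2) + Rabs (phi1 x - 1/2)))).
      { pose proof (Rabs_pos (phi0 x - 1/2)); pose proof (Rabs_pos (phi1 x - 1/2)); lra. }
      intros u w Hu Huw Hw; unfold flow.
      replace (1/2 + flow_disp (phi0 x - 1/2) (phi1 x - 1/2) w -
               (1/2 + flow_disp (phi0 x - 1/2) (phi1 x - 1/2) u))
        with (flow_disp (phi0 x - 1/2) (phi1 x - 1/2) w -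
              flow_disp (phi0 x - 1/2) (phi1 x - 1/2) u) by ring.
      exact (flow_disp_lipschitz _ _ 0 1 ltac:(lra) ltac:(lra) u w Hu Huw Hw).
    + intros s t Hs Hst Ht; apply flow_L_int; lra.
Qed.

Lemma flow_endpoints phi0 phi1 x : flow phi0 phi1 0 x = phi0 x /\ flow phi0 phi1 1 x = phi1 x.
Proof.
  destruct contraction_values as (H0 & _ & H1); unfold flow, flow_disp; rewrite H0, H1.
  destruct (Rle_dec 0 (1/2)); [|lra]; destruct (Rle_dec 1 (1/2)); [lra|]; split; ring.
Qed.

Lemma flow_rel_total phi0 phi1 : Mon_plus phi0 -> Mon_plus phi1 -> flow_rel phi0 phi1.
Proof.
  intros H0 H1; exists vfield; split; [exact vfield_L2_H10|].
  exists (flow phi0 phi1); split; [apply flow_lagrangian; assumption|].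
  intros x _; apply flow_endpoints.
Qed.

Theorem mainTheorem3 :
  (forall phi0 phi1, Mon_plus phi0 -> Mon_plus phi1 ->
     flow_rel phi0 phi1 -> flow_rel phi1 phi0) /\
  (forall phi0 phi1 phi2, Mon_plus phi0 -> Mon_plus phi1 -> Mon_plus phi2 ->
     flow_rel phi0 phi1 -> flow_rel phi1 phi2 -> flow_rel phi0 phi2) /\
  (forall phi0 phi1, Mon_plus phi0 -> Mon_plus phi1 -> flow_rel phi0 phi1).
Proof.
  split; [|split].
  - intros phi0 phi1 H0 H1 _; apply flow_rel_total; assumption.
  - intros phi0 phi1 phi2 H0 _ H2 _ _; apply flow_rel_total; assumption.
  - exact flow_rel_total.
Qed.
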